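(* Let $0<\nu<1$ and $0\le \mu<1$. Then for every $t>0$, $$f_{\nu,\mu}(t)=\frac{1}{\pi}\int_0^\infty u^{-\mu}\,\exp\!\big(-ut-u^{\nu}\cos(\pi\nu)\big)\,\sin\!\big(u^{\nu}\sin(\pi\nu)+\pi\mu\big)\,du .$$
   Context: For $0<\nu<1$ and real $\rho$, $f_{\nu,\rho}$ denotes the inverse Laplace transform of $F(s)=s^{-\rho}e^{-s^{\nu}}$, i.e. $f_{\nu,\rho}(t)=\frac{1}{2\pi i}\int_{c-i\infty}^{c+i\infty}e^{st}s^{-\rho}e^{-s^{\nu}}\,ds$ for $t>0$, $c>0$, with principal branches of the powers of $s$; thus $\int_0^\infty e^{-st}f_{\nu,\rho}(t)\,dt=s^{-\rho}e^{-s^\nu}$. *)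

From Stdlib Require Import Reals Lra.
From Coquelicot Require Import Coquelicot.
Open Scope R_scope.

(* Principal argument of a complex number, in (-PI, PI]. *)
Definition Carg (z : C) : R :=
  let x := fst z in let y := snd z in
  if Rlt_dec 0 x then atan (y / x)
  else if Rlt_dec x 0 then
    (if Rle_dec 0 y then atan (y / x) + PI else atan (y / x) - PI)
  else if Rlt_dec 0 y then PI / 2
  else if Rlt_dec y 0 then - (PI / 2)
  else 0.

Definition Cexp (z : C) : C :=
  (exp (fst z) * cos (snd z), exp (fst z) * sin (snd z)).

(* Principal power z^a = exp (a * Log z), real exponent a, for z <> 0. *)
Definition Cpow (z : C) (a : R) : C :=
  (exp (a * ln (Cmod z)) * cos (a * Carg z),
   exp (a * ln (Cmod z)) * sin (a * Carg z)).

(* Integrand of the Bromwich integral along s = c + i y, after ds = i dy: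
   (1/(2 pi i)) e^{st} s^{-rho} e^{-s^nu} ds = (1/(2 pi)) e^{st} s^{-rho} e^{-s^nu} dy. *)
Definition bromwich_integrand (nu rho c t : R) (y : R) : C :=
  let s : C := (c, y) in
  Cmult (RtoC (/ (2 * PI)))
    (Cmult (Cexp (Cmult s (RtoC t)))
       (Cmult (Cpow s (- rho)) (Cexp (Copp (Cpow s nu))))).

(* v is the value f_{nu,rho}(t) of the inverse Laplace transform of
   s^{-rho} e^{-s^nu}, computed by the Bromwich integral on the line Re s = c. *)
Definition inv_laplace_value (nu rho c t : R) (v : C) : Prop :=
  is_RInt_gen (bromwich_integrand nu rho c t)
    (Rbar_locally m_infty) (Rbar_locally p_infty) v.

Definition rhs_integrand (nu mu t : R) (u : R) : R :=
  / PI * (Rpower u (- mu) * exp (- (u * t) - Rpower u nu * cos (PI * nu))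
          * sin (Rpower u nu * sin (PI * nu) + PI * mu)).

From Pilot Require Import Defs.
From Stdlib Require Import Reals Lra.
From Coquelicot Require Import Coquelicot.
Open Scope R_scope.

(* Let F(s) = e^{st} s^{-μ} e^{-s^ν}.  In polar coordinates s = r e^{iθ} the form
   Im (F(s) ds) is closed, so by Green's formula its integral vanishes on the boundary
   of the region 0 <= θ <= π, ε <= r, Re s <= c, r <= b.  That boundary consists of
   [ε, c] (where F is real, so the form vanishes), the segment of the line Re s = c up
   to height sqrt (b² - c²), an arc of radius b, the segment [-b, -ε], on which the
   form is π times the right-hand integrand, and an arc of radius ε.  The small arc
   contributes O(ε^{1-μ}).  On the large arc, |F| is at most b^{-μ} e^{t c - cos(νθ) b^ν}
   for θ <= π/(1+ν) and b^{-μ} e^{-t δ b + b^ν} with δ = -cos(π/(1+ν)) > 0 beyond, so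
   as ν < 1 the large arc contributes O(1/b).  Hence
   ∫_0^∞ (rhs) = (1/π) ∫_0^∞ Re F(c+iy) dy, which converges because
   |F(c+iy)| <= e^{tc} e^{-cos(νπ/2) |s|^ν} = O(y^{-2}).  Finally
   F(c-iy) is the conjugate of F(c+iy), so the Bromwich integral
   (1/2π) ∫_{-∞}^{∞} F(c+iy) dy is real and equals the same value. *)

(** * Limits and improper integrals *)

Lemma ex_RInt_continuous_R (f : R -> R) a b :
  (forall z, Rmin a b <= z <= Rmax a b -> continuous f z) -> ex_RInt f a b.
Proof. apply (ex_RInt_continuous (V := R_CompleteNormedModule)). Qed.

Lemma ex_derive_continuous_R (f : R -> R) x : ex_derive f x -> continuous f x.
Proof. apply (ex_derive_continuous (K := R_AbsRing) (V := R_NormedModule)). Qed.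

Lemma exp_le_compat x y : x <= y -> exp x <= exp y.
Proof. intros [H | ->]; [now apply Rlt_le, exp_increasing | apply Rle_refl]. Qed.

Lemma Rabs_cos_le_1 x : Rabs (cos x) <= 1.
Proof. apply Rabs_le, COS_bound. Qed.

Lemma Rabs_sin_le_1 x : Rabs (sin x) <= 1.
Proof. apply Rabs_le, SIN_bound. Qed.

Lemma Rpower_2 r : 0 < r -> Rpower r 2 = r * r.
Proof.
  intros Hr. unfold Rpower. replace (2 * ln r) with (ln r + ln r) by ring.
  rewrite exp_plus, exp_ln; auto.
Qed.

(* The maximum of x^q e^{-k x^ν} over x > 0, attained at x^ν = q / (ν k). *)
Definition decay_bound (nu q k : R) : R := exp ((q / nu) * ln ((q / nu) / k) - q / nu).

Lemma Rpower_exp_decay_le nu q k r : 0 < nu -> 0 < q -> 0 < k -> 0 < r ->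
  Rpower r q * exp (- (k * Rpower r nu)) <= decay_bound nu q k.
Proof.
  intros Hnu Hq Hk Hr. unfold decay_bound, Rpower. rewrite <- exp_plus.
  apply exp_le_compat.
  set (w := exp (nu * ln r)). set (p := q / nu).
  assert (Hw : 0 < w) by apply exp_pos.
  assert (Hp : 0 < p) by (apply Rdiv_lt_0_compat; lra).
  assert (E : q * ln r = p * ln w) by (unfold w, p; rewrite ln_exp; field; lra).
  rewrite E.
  (* ln x <= x - 1 at x = w k / p *)
  assert (H := exp_ineq1_le (ln (w * (k / p)))).
  rewrite exp_ln in H by (apply Rmult_lt_0_compat; auto; apply Rdiv_lt_0_compat; lra).
  rewrite ln_mult, ln_div in H by (try apply Rdiv_lt_0_compat; lra).
  rewrite ln_div by lra.
  apply Rmult_le_compat_l with (r := p) in H; [| lra].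
  replace (p * (w * (k / p))) with (k * w) in H by (field; lra).
  lra.
Qed.

Lemma Rpower_le_mul_eventually nu k : nu < 1 -> 0 < k ->
  Rbar_locally p_infty (fun b => Rpower b nu <= k * b).
Proof.
  intros Hnu Hk. exists (exp (Rabs (ln k) / (1 - nu))). intros b Hb.
  assert (Hb0 : 0 < b) by (pose proof (exp_pos (Rabs (ln k) / (1 - nu))); lra).
  apply ln_increasing in Hb; [| apply exp_pos]. rewrite ln_exp in Hb.
  rewrite <- (exp_ln b) at 2 by auto. rewrite <- (exp_ln k) by auto.
  unfold Rpower. rewrite <- exp_plus. apply exp_le_compat.
  assert (Rabs (ln k) <= (1 - nu) * ln b).
  { apply Rmult_le_reg_r with (/ (1 - nu)); [apply Rinv_0_lt_compat; lra |].
    replace ((1 - nu) * ln b * / (1 - nu)) with (ln b) by (field; lra).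
    unfold Rdiv in Hb. lra. }
  pose proof (Rabs_maj2 (ln k)). lra.
Qed.

Lemma filterlim_abs_le_0 {T} {F : (T -> Prop) -> Prop} {FF : Filter F} (u v : T -> R) :
  F (fun x => Rabs (u x) <= v x) -> filterlim v F (locally 0) -> filterlim u F (locally 0).
Proof.
  intros Hb Hv. apply (filterlim_le_le (fun x => - v x) u v (Finite 0)).
  - revert Hb. apply filter_imp. intros x Hx. now apply Rabs_le_between.
  - replace 0 with (- 0) by ring.
    exact (filterlim_comp _ _ _ _ _ _ _ _ Hv (filterlim_opp (V := R_NormedModule) 0)).
  - exact Hv.
Qed.

Lemma filterlim_mult_0 {T} {F : (T -> Prop) -> Prop} {FF : Filter F} (C : R) (v : T -> R) :
  filterlim v F (locally 0) -> filterlim (fun x => C * v x) F (locally 0).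
Proof.
  intros Hv. rewrite <- (Rmult_0_r C).
  exact (filterlim_comp _ _ _ _ _ _ _ _ Hv (filterlim_scal_r (V := R_NormedModule) C 0)).
Qed.

Lemma filterlim_prod_plus {Fa Fb : (R -> Prop) -> Prop} {FFa : Filter Fa} {FFb : Filter Fb}
    (u v : R -> R) lu lv :
  filterlim u Fa (locally lu) -> filterlim v Fb (locally lv) ->
  filterlim (fun ab => u (fst ab) + v (snd ab)) (filter_prod Fa Fb) (locally (lu + lv)).
Proof.
  intros Hu Hv.
  apply (filterlim_comp_2 (G := locally lu) (H := locally lv)
           (fun ab => u (fst ab)) (fun ab => v (snd ab)) Rplus).
  - exact (filterlim_comp _ _ _ _ _ _ _ _ filterlim_fst Hu).
  - exact (filterlim_comp _ _ _ _ _ _ _ _ filterlim_snd Hv).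
  - exact (filterlim_plus (V := R_NormedModule) lu lv).
Qed.

Lemma filterlim_Rpower_at_right_0 p :
  0 < p -> filterlim (fun x => Rpower x p) (at_right 0) (locally 0).
Proof.
  intros Hp. apply filterlim_locally. intros eps. pose proof (cond_pos eps).
  exists (mkposreal (exp (ln eps / p)) (exp_pos _)). intros x Hx Hx0.
  change (Rabs (x - 0) < exp (ln eps / p)) in Hx. change (Rabs (Rpower x p - 0) < eps).
  rewrite Rminus_0_r, Rabs_pos_eq by (apply Rlt_le, exp_pos).
  rewrite Rminus_0_r, Rabs_pos_eq in Hx by lra.
  apply ln_increasing in Hx; [| lra]. rewrite ln_exp in Hx.
  rewrite <- (exp_ln eps) by lra. apply exp_increasing.
  apply Rmult_lt_reg_r with (/ p); [now apply Rinv_0_lt_compat |].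
  replace (p * ln x * / p) with (ln x) by (field; lra). exact Hx.
Qed.

Lemma filterlim_div_p_infty (C : R) :
  filterlim (fun x => C / x) (Rbar_locally p_infty) (locally 0).
Proof.
  apply filterlim_mult_0. exact (filterlim_Rbar_inv p_infty ltac:(discriminate)).
Qed.

Lemma is_RInt_gen_of_cvg {Fa Fb : (R -> Prop) -> Prop} {FFa : Filter Fa} {FFb : Filter Fb}
    (f : R -> R) l :
  filter_prod Fa Fb (fun ab => ex_RInt f (fst ab) (snd ab)) ->
  filterlim (fun ab => RInt f (fst ab) (snd ab)) (filter_prod Fa Fb) (locally l) ->
  is_RInt_gen f Fa Fb l.
Proof.
  intros Hex Hlim P HP. specialize (Hlim P HP). unfold filtermap in Hlim. unfold filtermapi.
  generalize (filter_and _ _ Hex Hlim). apply filter_imp. intros ab [Hab HPab].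
  exists (RInt f (fst ab) (snd ab)). split; auto.
  now apply (RInt_correct (V := R_CompleteNormedModule)).
Qed.

Lemma is_RInt_gen_pair {Fa Fb : (R -> Prop) -> Prop} {FFa : Filter Fa} {FFb : Filter Fb}
    (f g : R -> R) lf lg :
  is_RInt_gen f Fa Fb lf -> is_RInt_gen g Fa Fb lg ->
  is_RInt_gen (V := prod_NormedModule R_AbsRing R_NormedModule R_NormedModule)
    (fun y => (f y, g y)) Fa Fb (lf, lg).
Proof.
  intros Hf Hg P [eps HP].
  specialize (Hf (ball lf eps) (locally_ball lf eps)).
  specialize (Hg (ball lg eps) (locally_ball lg eps)).
  unfold filtermapi in Hf, Hg |- *. generalize (filter_and _ _ Hf Hg). apply filter_imp.
  intros ab [[yf [Hyf Bf]] [yg [Hyg Bg]]]. exists (yf, yg). split.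
  - now apply is_RInt_fct_extend_pair.
  - now apply HP.
Qed.

Lemma is_RInt_gen_of_primitive (f : R -> R) la lb :
  (forall y, continuous f y) ->
  filterlim (fun x => RInt f 0 x) (Rbar_locally m_infty) (locally la) ->
  filterlim (fun x => RInt f 0 x) (Rbar_locally p_infty) (locally lb) ->
  is_RInt_gen f (Rbar_locally m_infty) (Rbar_locally p_infty) (- la + lb).
Proof.
  intros Hf Ha Hb. apply is_RInt_gen_of_cvg.
  - apply filter_forall. intros ab. apply ex_RInt_continuous_R. auto.
  - apply (filterlim_ext (fun ab => - RInt f 0 (fst ab) + RInt f 0 (snd ab))).
    + intros [a b]. simpl.
      rewrite <- (RInt_Chasles (V := R_CompleteNormedModule) f 0 a b)
        by (apply ex_RInt_continuous_R; auto).
      unfold plus; simpl. ring.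
    + apply (filterlim_prod_plus (fun a => - RInt f 0 a)); [| exact Hb].
      exact (is_lim_opp _ m_infty la Ha).
Qed.

Lemma RInt_0_opp (f : R -> R) x :
  (forall y, continuous f y) -> RInt f 0 (- x) = - RInt (fun y => f (- y)) 0 x.
Proof.
  intros Hf. rewrite <- (RInt_opp (V := R_CompleteNormedModule)).
  - symmetry. apply is_RInt_unique. rewrite <- Ropp_0 at 2.
    apply (is_RInt_comp_opp (V := R_NormedModule)), (RInt_correct (V := R_CompleteNormedModule)).
    apply ex_RInt_continuous_R. auto.
  - apply ex_RInt_continuous_R. intros y _.
    apply (continuous_comp Ropp f); [| apply Hf].
    apply (continuous_opp (V := R_NormedModule)), continuous_id.
Qed.

Lemma filterlim_RInt_0_m_infty (f : R -> R) s L :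
  (forall y, continuous f y) -> (forall y, f (- y) = s * f y) ->
  filterlim (fun x => RInt f 0 x) (Rbar_locally p_infty) (locally L) ->
  filterlim (fun x => RInt f 0 x) (Rbar_locally m_infty) (locally (- s * L)).
Proof.
  intros Hf Hs HL.
  apply (filterlim_ext (fun x => - s * RInt f 0 (- x))).
  - intros x. rewrite <- (Ropp_involutive x) at 2. rewrite (RInt_0_opp f (- x)) by auto.
    rewrite (RInt_ext (fun y => f (- y)) (fun y => scal s (f y))) by (intros; apply Hs).
    rewrite (RInt_scal (V := R_CompleteNormedModule)) by (apply ex_RInt_continuous_R; auto).
    unfold scal; simpl. unfold mult; simpl. ring.
  - apply (is_lim_scal_l _ (- s) m_infty L).
    exact (filterlim_comp _ _ _ _ _ _ _ _ (filterlim_Rbar_opp m_infty) HL).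
Qed.

Section InverseSquareTail.
Variables (f : R -> R) (K : R).
Hypothesis f_cont : forall y, continuous f y.
Hypothesis f_bound : forall y, 1 <= y -> Rabs (f y) <= K / (y * y).

Lemma RInt_inv_sqr m n : 0 < m <= n -> RInt (fun y => K / (y * y)) m n = K / m - K / n.
Proof.
  intros Hmn. apply is_RInt_unique.
  replace (K / m - K / n) with (minus (- K / n) (- K / m))
    by (unfold minus, plus, opp; simpl; field; lra).
  apply (is_RInt_derive (V := R_CompleteNormedModule) (fun y => - K / y)).
  - intros x Hx. rewrite Rmin_left, Rmax_right in Hx by lra.
    auto_derive; [lra | field; lra].
  - intros x Hx. rewrite Rmin_left, Rmax_right in Hx by lra.
    apply ex_derive_continuous_R. auto_derive. nra.
Qed.

Lemma abs_RInt_le_inv_sqr m n : 1 <= m <= n -> Rabs (RInt f m n) <= K / m.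
Proof.
  intros Hmn.
  assert (HK : 0 <= K).
  { specialize (f_bound 1 (Rle_refl 1)). pose proof (Rabs_pos (f 1)).
    rewrite Rmult_1_r, Rdiv_1_r in f_bound. lra. }
  apply Rle_trans with (RInt (fun y => K / (y * y)) m n).
  - apply Rle_trans with (RInt (fun y => Rabs (f y)) m n).
    + apply abs_RInt_le; [lra |]. apply ex_RInt_continuous_R. auto.
    + apply RInt_le; try lra.
      * apply ex_RInt_continuous_R. intros z _.
        apply (continuous_comp f Rabs); [apply f_cont | apply continuous_Rabs].
      * apply ex_RInt_continuous_R. intros z Hz. rewrite Rmin_left, Rmax_right in Hz by lra.
        apply ex_derive_continuous_R. auto_derive. nra.
      * intros y Hy. apply f_bound. lra.
  - rewrite RInt_inv_sqr by lra.
    assert (0 <= K / n) by (apply Rdiv_le_0_compat; lra). lra.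
Qed.

Lemma RInt_cvg_of_inv_sqr_bound :
  exists L, filterlim (fun Y => RInt f 0 Y) (Rbar_locally p_infty) (locally L).
Proof.
  assert (Hex : forall a b, ex_RInt f a b) by (intros; apply ex_RInt_continuous_R; auto).
  apply (filterlim_locally_cauchy (U := R_CompleteSpace)).
  intros eps. pose proof (cond_pos eps) as Heps.
  set (M := Rmax 1 (K / eps)). exists (fun Y => M < Y). split; [now exists M |].
  assert (Htail : forall m n, M < m <= n -> Rabs (RInt f m n) < eps).
  { intros m n Hmn. unfold M in Hmn.
    pose proof (Rmax_l 1 (K / eps)). pose proof (Rmax_r 1 (K / eps)).
    eapply Rle_lt_trans; [apply abs_RInt_le_inv_sqr; lra |].
    assert (HKm : K / eps < m) by lra.
    apply Rlt_div_l in HKm; [| lra]. apply Rlt_div_l; lra. }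
  intros u v Hu Hv. change (Rabs (RInt f 0 v - RInt f 0 u) < eps).
  assert (Hsplit : RInt f 0 v - RInt f 0 u = RInt f u v).
  { rewrite <- (RInt_Chasles (V := R_CompleteNormedModule) f 0 u v) by apply Hex.
    unfold plus; simpl. ring. }
  rewrite Hsplit. destruct (Rle_lt_dec u v) as [Huv | Hvu].
  - apply Htail. lra.
  - rewrite <- (opp_RInt_swap (V := R_CompleteNormedModule)) by apply Hex.
    unfold opp; simpl. rewrite Rabs_Ropp. apply Htail. lra.
Qed.

End InverseSquareTail.

(** * Green's formula in polar coordinates *)

Lemma continuous_comp_2d (F : R -> R -> R) (f g : R -> R) x :
  continuous f x -> continuous g x -> continuity_2d_pt F (f x) (g x) ->
  continuous (fun z => F (f z) (g z)) x.
Proof.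
  intros Hf Hg HF. apply (continuous_comp_2 f g F); auto.
  now apply continuity_2d_pt_filterlim.
Qed.

Lemma continuity_2d_pt_continuous_l (F : R -> R -> R) x y :
  continuity_2d_pt F x y -> continuous (fun u => F u y) x.
Proof.
  intros H. apply (continuous_comp_2d F (fun u => u) (fun _ => y)); auto.
  - apply continuous_id.
  - apply continuous_const.
Qed.

Lemma continuity_2d_pt_continuous_r (F : R -> R -> R) x y :
  continuity_2d_pt F x y -> continuous (fun v => F x v) y.
Proof.
  intros H. apply (continuous_comp_2d F (fun _ => x) (fun v => v)); auto.
  - apply continuous_const.
  - apply continuous_id.
Qed.

Lemma continuous_along_curve (F : R -> R -> R) (g : R -> R) x :
  continuous g x -> 0 < g x ->
  (forall r th, 0 < r -> continuity_2d_pt (fun u v => F v u) th r) ->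
  continuous (fun z => F (g z) z) x.
Proof.
  intros Hg Hgx HF.
  apply (continuous_comp_2d (fun u v => F v u) (fun z => z) g);
    [apply continuous_id | exact Hg | now apply HF].
Qed.

Lemma locally_2d_upper_half_plane (P : R -> R -> Prop) x y :
  0 < y -> (forall u v, 0 < v -> P u v) -> locally_2d P x y.
Proof.
  intros Hy H. exists (mkposreal (y / 2) ltac:(lra)). simpl. intros u v _ Hv.
  apply H. apply Rabs_def2 in Hv. lra.
Qed.

(* [Q dr + S dθ] is a closed 1-form on r > 0; [green_polar] is Green's formula for
   it on the region {a <= θ <= b, eps <= r <= h θ}. *)
Section PolarGreen.
Variables (Q S dQ : R -> R -> R).
Hypothesis Q_derive : forall r th, 0 < r -> is_derive (fun u => Q r u) th (dQ r th).
Hypothesis S_derive : forall r th, 0 < r -> is_derive (fun u => S u th) r (dQ r th).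
Hypothesis dQ_cont : forall r th, 0 < r -> continuity_2d_pt (fun u v => dQ v u) th r.
Hypothesis Q_cont : forall r th, 0 < r -> continuity_2d_pt (fun u v => Q v u) th r.
Hypothesis S_cont : forall r th, 0 < r -> continuity_2d_pt (fun u v => S v u) th r.

Lemma continuity_2d_pt_Derive_Q r th :
  0 < r -> continuity_2d_pt (fun u v => Derive (fun z => Q v z) u) th r.
Proof.
  intros Hr. eapply continuity_2d_pt_ext_loc; [| apply (dQ_cont r th Hr)].
  apply locally_2d_upper_half_plane; auto.
  intros u v Hv. symmetry. apply is_derive_unique. auto.
Qed.

Lemma is_derive_RInt_Q_to_curve (h : R -> R) dh eps th :
  0 < eps -> eps < h th -> is_derive h th dh ->
  is_derive (fun x => RInt (fun r => Q r x) eps (h x)) th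
    (S (h th) th - S eps th + Q (h th) th * dh).
Proof.
  intros Heps Hh Hd.
  assert (Q_cont_r : forall r x, 0 < r -> continuous (fun r => Q r x) r).
  { intros r x Hr. apply (continuity_2d_pt_continuous_r (fun u v => Q v u)). auto. }
  assert (HdQ : RInt (fun r => Derive (fun u => Q r u) th) eps (h th)
                = S (h th) th - S eps th).
  { rewrite (RInt_ext _ (fun r => dQ r th)).
    2:{ intros z Hz. rewrite Rmin_left in Hz by lra. apply is_derive_unique, Q_derive. lra. }
    apply is_RInt_unique, (is_RInt_derive (fun r => S r th)).
    - intros z Hz. rewrite Rmin_left in Hz by lra. apply S_derive. lra.
    - intros z Hz. rewrite Rmin_left in Hz by lra.
      apply (continuity_2d_pt_continuous_r (fun u v => dQ v u)), dQ_cont. lra. }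
  rewrite <- HdQ.
  apply (is_derive_RInt_param_bound_comp_aux3 (fun x r => Q r x) eps h th dh).
  - apply filter_forall. intros y. apply ex_RInt_continuous_R. intros z Hz.
    apply Q_cont_r. rewrite Rmin_left in Hz; lra.
  - exists (mkposreal (eps / 2) ltac:(lra)). apply filter_forall. intros y.
    apply ex_RInt_continuous_R. intros z Hz. simpl in Hz.
    apply Q_cont_r. rewrite Rmin_left in Hz; lra.
  - exact Hd.
  - exists (mkposreal (eps / 2) ltac:(lra)). apply filter_forall. intros y z Hz.
    simpl in Hz. eexists. apply Q_derive.
    assert (Rmin eps (h th - eps / 2) > 0) by (apply Rmin_case; lra). lra.
  - intros z Hz. apply continuity_2d_pt_Derive_Q. rewrite Rmin_left in Hz; lra.
  - apply locally_2d_upper_half_plane; [lra |]. intros u v Hv.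
    now apply continuity_2d_pt_Derive_Q.
  - apply continuity_pt_filterlim, Q_cont_r. lra.
Qed.

Lemma green_polar (h dh : R -> R) eps a b :
  0 < eps -> a <= b ->
  (forall th, a <= th <= b -> eps < h th /\ is_derive h th (dh th) /\ continuous dh th) ->
  RInt (fun th => S (h th) th + Q (h th) th * dh th) a b - RInt (fun th => S eps th) a b
  = RInt (fun r => Q r b) eps (h b) - RInt (fun r => Q r a) eps (h a).
Proof.
  intros Heps Hab Hh.
  assert (Hcurve : forall x, a <= x <= b ->
            continuous (fun z => S (h z) z + Q (h z) z * dh z) x).
  { intros x Hx. destruct (Hh x Hx) as [H1 [H2 H3]].
    assert (h_cont : continuous h x) by (apply ex_derive_continuous_R; eexists; eauto).
    apply continuity_pt_filterlim, continuity_pt_plus; [| apply continuity_pt_mult];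
      apply continuity_pt_filterlim; auto; apply continuous_along_curve; auto; lra. }
  assert (Harc : forall x, continuous (fun z => S eps z) x).
  { intros x. apply (continuous_along_curve S (fun _ => eps)); auto using continuous_const. }
  rewrite <- (RInt_minus (V := R_CompleteNormedModule));
    [| apply ex_RInt_continuous_R; intros x Hx; apply Hcurve;
       rewrite Rmin_left, Rmax_right in Hx; lra
     | apply ex_RInt_continuous_R; auto].
  apply is_RInt_unique, (is_RInt_derive (fun x => RInt (fun r => Q r x) eps (h x))).
  - intros x Hx. rewrite Rmin_left, Rmax_right in Hx by lra.
    destruct (Hh x Hx) as [H1 [H2 _]].
    unfold minus, plus, opp; simpl. replace (S (h x) x + Q (h x) x * dh x + - S eps x)
      with (S (h x) x - S eps x + Q (h x) x * dh x) by ring.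
    now apply is_derive_RInt_Q_to_curve.
  - intros x Hx. rewrite Rmin_left, Rmax_right in Hx by lra.
    apply (continuous_minus (V := R_NormedModule)); auto.
Qed.

End PolarGreen.

(** * The contour *)

Lemma continuity_pt_exp x : continuity_pt exp x.
Proof. apply derivable_continuous_pt, derivable_pt_exp. Qed.

Lemma continuity_pt_ln x : 0 < x -> continuity_pt ln x.
Proof.
  intros Hx. apply derivable_continuous_pt. exists (/ x). now apply derivable_pt_lim_ln.
Qed.

Ltac continuity_2d :=
  repeat first
    [ apply continuity_2d_pt_const | apply continuity_2d_pt_id1
    | apply continuity_2d_pt_id2 | apply continuity_2d_pt_plus
    | apply continuity_2d_pt_minus | apply continuity_2d_pt_mult
    | apply continuity_2d_pt_opp
    | apply (continuity_1d_2d_pt_comp exp); [apply continuity_pt_exp |]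
    | apply (continuity_1d_2d_pt_comp sin); [apply continuity_sin |]
    | apply (continuity_1d_2d_pt_comp cos); [apply continuity_cos |]
    | apply (continuity_1d_2d_pt_comp ln); [apply continuity_pt_ln; simpl; lra |] ].

(* For s = r e^{iθ} (r > 0, |θ| < π), e^{st} s^{-μ} e^{-s^ν} = exp (logF_re + i logF_im),
   and Im (e^{st} s^{-μ} e^{-s^ν} ds) = form_r dr + form_th dθ.  The integrand is
   holomorphic, so this form is closed: both cross derivatives equal form_deriv. *)
Section PolarForm.
Variables (nu mu t : R).

Definition logF_re (r th : R) : R := t * r * cos th - mu * ln r - Rpower r nu * cos (nu * th).
Definition logF_im (r th : R) : R := t * r * sin th - mu * th - Rpower r nu * sin (nu * th).

Definition form_r (r th : R) : R := exp (logF_re r th) * sin (logF_im r th + th).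
Definition form_th (r th : R) : R := r * exp (logF_re r th) * cos (logF_im r th + th).

Definition form_deriv (r th : R) : R := exp (logF_re r th) *
  ((- (t * r * sin th) + nu * Rpower r nu * sin (nu * th)) * sin (logF_im r th + th)
   + (t * r * cos th - mu - nu * Rpower r nu * cos (nu * th) + 1) * cos (logF_im r th + th)).

Lemma is_derive_form_r r th : 0 < r -> is_derive (fun u => form_r r u) th (form_deriv r th).
Proof.
  intros Hr. unfold form_r, form_deriv, logF_re, logF_im, Rpower.
  auto_derive; [auto | unfold Rminus; ring].
Qed.

Lemma is_derive_form_th r th : 0 < r -> is_derive (fun u => form_th u th) r (form_deriv r th).
Proof.
  intros Hr. unfold form_th, form_deriv, logF_re, logF_im, Rpower.
  auto_derive; [auto | unfold Rminus; field; lra].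
Qed.

Lemma continuity_2d_pt_form_r r th : 0 < r -> continuity_2d_pt (fun u v => form_r v u) th r.
Proof. intros Hr. unfold form_r, logF_re, logF_im, Rpower. continuity_2d. Qed.

Lemma continuity_2d_pt_form_th r th : 0 < r -> continuity_2d_pt (fun u v => form_th v u) th r.
Proof. intros Hr. unfold form_th, logF_re, logF_im, Rpower. continuity_2d. Qed.

Lemma continuity_2d_pt_form_deriv r th :
  0 < r -> continuity_2d_pt (fun u v => form_deriv v u) th r.
Proof. intros Hr. unfold form_deriv, logF_re, logF_im, Rpower. continuity_2d. Qed.

Lemma continuous_form_th r th : 0 < r -> continuous (fun u => form_th r u) th.
Proof.
  intros Hr. apply (continuity_2d_pt_continuous_l (fun u v => form_th v u)).
  now apply continuity_2d_pt_form_th.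
Qed.

Lemma green_form (h dh : R -> R) eps a b :
  0 < eps -> a <= b ->
  (forall th, a <= th <= b -> eps < h th /\ is_derive h th (dh th) /\ continuous dh th) ->
  RInt (fun th => form_th (h th) th + form_r (h th) th * dh th) a b - RInt (form_th eps) a b
  = RInt (fun r => form_r r b) eps (h b) - RInt (fun r => form_r r a) eps (h a).
Proof.
  apply (green_polar form_r form_th form_deriv).
  - exact is_derive_form_r.
  - exact is_derive_form_th.
  - exact continuity_2d_pt_form_deriv.
  - exact continuity_2d_pt_form_r.
  - exact continuity_2d_pt_form_th.
Qed.

Lemma logF_re_conj r th : logF_re r (- th) = logF_re r th.
Proof.
  unfold logF_re. replace (nu * - th) with (- (nu * th)) by ring. now rewrite !cos_neg.
Qed.

Lemma logF_im_conj r th : logF_im r (- th) = - logF_im r th.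
Proof.
  unfold logF_im. replace (nu * - th) with (- (nu * th)) by ring. rewrite !sin_neg. ring.
Qed.

Lemma form_r_0 r : form_r r 0 = 0.
Proof.
  unfold form_r, logF_im. rewrite !Rmult_0_r, sin_0, !Rmult_0_r.
  replace (0 - 0 - 0 + 0) with 0 by ring. rewrite sin_0. ring.
Qed.

Lemma form_r_PI r : 0 < r -> form_r r PI = PI * rhs_integrand nu mu t r.
Proof.
  intros Hr. pose proof PI_RGT_0.
  unfold form_r, rhs_integrand, logF_re, logF_im.
  rewrite cos_PI, sin_PI. replace (nu * PI) with (PI * nu) by ring.
  set (E := Rpower r nu).
  replace (t * r * 0 - mu * PI - E * sin (PI * nu) + PI)
    with (- (E * sin (PI * nu) + PI * mu) + PI) by ring.
  rewrite neg_sin, sin_neg.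
  replace (t * r * -1 - mu * ln r - E * cos (PI * nu))
    with (- mu * ln r + (- (r * t) - E * cos (PI * nu))) by ring.
  unfold Rpower. rewrite exp_plus. field. lra.
Qed.

End PolarForm.

Lemma acos_div_bounds c b : 0 < c -> c < b ->
  0 < acos (c / b) < PI / 2 /\ cos (acos (c / b)) = c / b.
Proof.
  intros Hc Hb.
  assert (Hcb : 0 < c / b < 1) by (split; [apply Rdiv_lt_0_compat | apply Rlt_div_l]; lra).
  assert (Hcos : cos (acos (c / b)) = c / b) by (apply cos_acos; lra).
  destruct (acos_bound_lt (c / b)) as [H0 HPI]; [lra |].
  split; [split |]; auto.
  destruct (Rlt_le_dec (acos (c / b)) (PI / 2)) as [| Hge]; auto.
  assert (cos (acos (c / b)) <= 0) by (apply cos_le_0; lra). lra.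
Qed.

Section Contour.
Variables (nu mu t c : R).
Hypothesis c_pos : 0 < c.

(* The line Re s = c in polar coordinates: r = c / cos θ. *)
Definition line_radius (th : R) : R := c / cos th.
Definition line_radius' (th : R) : R := c * sin th / (cos th * cos th).

Definition line_integrand (th : R) : R :=
  form_th nu mu t (line_radius th) th + form_r nu mu t (line_radius th) th * line_radius' th.

Lemma line_radius_props eps th : 0 < eps < c -> 0 <= th < PI / 2 ->
  eps < line_radius th /\ is_derive line_radius th (line_radius' th)
  /\ continuous line_radius' th.
Proof.
  intros Heps Hth.
  assert (Hcos : 0 < cos th) by (apply cos_gt_0; lra).
  pose proof (COS_bound th).
  split; [| split].
  - unfold line_radius. apply Rlt_le_trans with c; [lra |].
    apply Rmult_le_reg_r with (cos th); auto.
    unfold Rdiv. rewrite Rmult_assoc, Rinv_l by lra. nra.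
  - unfold line_radius, line_radius'. auto_derive; [lra | field; lra].
  - apply ex_derive_continuous_R. unfold line_radius'. auto_derive. nra.
Qed.

Lemma contour_identity eps b : 0 < eps < c -> c < b ->
  RInt (fun r => form_r nu mu t r PI) eps b =
  RInt line_integrand 0 (acos (c / b)) - RInt (form_th nu mu t eps) 0 PI
  + RInt (form_th nu mu t b) (acos (c / b)) PI.
Proof.
  intros Heps Hb. pose proof PI_RGT_0.
  destruct (acos_div_bounds c b c_pos Hb) as [Hbeta Hcos]. set (beta := acos (c / b)) in *.
  assert (Hend : line_radius beta = b) by (unfold line_radius; rewrite Hcos; field; lra).
  assert (Gline := green_form nu mu t line_radius line_radius' eps 0 beta ltac:(lra) ltac:(lra)
    (fun th Hth => line_radius_props eps th Heps ltac:(lra))).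
  assert (Garc := green_form nu mu t (fun _ => b) (fun _ => 0) eps beta PI ltac:(lra) ltac:(lra)).
  specialize (Garc (fun th _ => conj (Rlt_trans _ _ _ (proj2 Heps) Hb)
                                 (conj (is_derive_const b th) (continuous_const 0 th)))).
  rewrite Hend, (RInt_ext (fun r => form_r nu mu t r 0) (fun _ => 0)), RInt_const in Gline
    by (intros; apply form_r_0).
  cbv beta in Garc.
  rewrite (RInt_ext (fun th => form_th nu mu t b th + form_r nu mu t b th * 0)
             (form_th nu mu t b)) in Garc by (intros; lra).
  rewrite <- (RInt_Chasles (V := R_CompleteNormedModule) (form_th nu mu t eps) 0 beta PI)
    by (apply ex_RInt_continuous_R; intros; apply continuous_form_th; lra).
  fold line_integrand in Gline. unfold plus, scal in *; simpl in *. unfold mult in *; simpl in *.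
  lra.
Qed.

End Contour.

Lemma Cmult_polar a1 b1 a2 b2 :
  Cmult (a1 * cos b1, a1 * sin b1) (a2 * cos b2, a2 * sin b2)
  = (a1 * a2 * cos (b1 + b2), a1 * a2 * sin (b1 + b2)).
Proof. unfold Cmult. simpl. rewrite cos_plus, sin_plus. f_equal; ring. Qed.

Section Line.
Variables (nu mu t c : R).
Hypothesis c_pos : 0 < c.

(* Real and imaginary parts of e^{st} s^{-μ} e^{-s^ν} at s = c + iy. *)
Definition line_re (y : R) : R :=
  exp (logF_re nu mu t (Cmod (c, y)) (atan (y / c)))
  * cos (logF_im nu mu t (Cmod (c, y)) (atan (y / c))).
Definition line_im (y : R) : R :=
  exp (logF_re nu mu t (Cmod (c, y)) (atan (y / c)))
  * sin (logF_im nu mu t (Cmod (c, y)) (atan (y / c))).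

Lemma Cmod_line y : Cmod (c, y) = c * sqrt (1 + (y / c)²).
Proof.
  unfold Cmod. cbn [fst snd].
  replace (c ^ 2 + y ^ 2) with (c ^ 2 * (1 + (y / c)²)) by (unfold Rsqr; field; lra).
  rewrite sqrt_mult_alt, sqrt_pow2; try lra. apply pow_le; lra.
Qed.

Lemma Cmod_line_cos y : Cmod (c, y) * cos (atan (y / c)) = c.
Proof.
  rewrite Cmod_line, cos_atan.
  assert (0 < sqrt (1 + (y / c)²)) by (apply sqrt_lt_R0; pose proof (Rle_0_sqr (y / c)); lra).
  field. lra.
Qed.

Lemma Cmod_line_sin y : Cmod (c, y) * sin (atan (y / c)) = y.
Proof.
  rewrite Cmod_line, sin_atan.
  assert (0 < sqrt (1 + (y / c)²)) by (apply sqrt_lt_R0; pose proof (Rle_0_sqr (y / c)); lra).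
  field. lra.
Qed.

Lemma Cmod_line_tan th : - PI / 2 < th < PI / 2 -> Cmod (c, c * tan th) = c / cos th.
Proof.
  intros Hth. assert (Hcos : 0 < cos th) by (apply cos_gt_0; lra).
  rewrite Cmod_line. replace (c * tan th / c) with (tan th) by (field; lra).
  unfold tan. replace (1 + (sin th / cos th)²) with ((/ cos th)²).
  - rewrite sqrt_Rsqr by (apply Rlt_le, Rinv_0_lt_compat; lra). field; lra.
  - pose proof (sin2_cos2 th). unfold Rsqr in *. field_simplify; try lra. f_equal. nra.
Qed.

Lemma continuous_line_re y : continuous line_re y.
Proof.
  apply ex_derive_continuous_R. unfold line_re, logF_re, logF_im, Rpower, Cmod. simpl.
  assert (0 < c ^ 2 + y ^ 2) by nra.
  auto_derive. repeat split; try lra; apply sqrt_lt_R0; lra.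
Qed.

Lemma continuous_line_im y : continuous line_im y.
Proof.
  apply ex_derive_continuous_R. unfold line_im, logF_re, logF_im, Rpower, Cmod. simpl.
  assert (0 < c ^ 2 + y ^ 2) by nra.
  auto_derive. repeat split; try lra; apply sqrt_lt_R0; lra.
Qed.

Lemma line_integrand_eq th : - PI / 2 < th < PI / 2 ->
  line_integrand nu mu t c th = c / (cos th * cos th) * line_re (c * tan th).
Proof.
  intros Hth. assert (Hcos : 0 < cos th) by (apply cos_gt_0; lra).
  unfold line_re. rewrite Cmod_line_tan by auto.
  replace (c * tan th / c) with (tan th) by (field; lra).
  rewrite atan_tan by lra.
  unfold line_integrand, line_radius, line_radius', form_th, form_r.
  set (B := logF_im nu mu t (c / cos th) th).
  replace (cos B) with (cos (B + th - th)) by (f_equal; ring).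
  rewrite cos_minus. field. lra.
Qed.

Lemma RInt_line_integrand beta : 0 <= beta < PI / 2 ->
  RInt (line_integrand nu mu t c) 0 beta = RInt line_re 0 (c * tan beta).
Proof.
  intros Hbeta. pose proof PI_RGT_0.
  replace (RInt line_re 0 (c * tan beta)) with (RInt line_re (c * tan 0) (c * tan beta))
    by now rewrite tan_0, Rmult_0_r.
  rewrite <- (RInt_comp (V := R_CompleteNormedModule) line_re (fun x => c * tan x)
                (fun x => c / (cos x * cos x))).
  - apply RInt_ext. intros x Hx. rewrite Rmin_left, Rmax_right in Hx by lra.
    now rewrite line_integrand_eq by lra.
  - intros. apply continuous_line_re.
  - intros x Hx. rewrite Rmin_left, Rmax_right in Hx by lra.
    assert (0 < cos x) by (apply cos_gt_0; lra).
    pose proof (sin2_cos2 x). unfold Rsqr in *. split.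
    + unfold tan. auto_derive; [lra |]. apply Rmult_eq_reg_r with (cos x * cos x); [| nra].
      field_simplify; try lra. nra.
    + apply ex_derive_continuous_R. auto_derive. nra.
Qed.

Lemma bromwich_integrand_eq y :
  bromwich_integrand nu mu c t y = (/ (2 * PI) * line_re y, / (2 * PI) * line_im y).
Proof.
  unfold bromwich_integrand, Defs.Cexp, Defs.Cpow, Defs.Carg. simpl fst; simpl snd.
  destruct (Rlt_dec 0 c) as [_ | Hn]; [| lra].
  rewrite !Cmult_polar.
  set (r := Cmod (c, y)). set (ph := atan (y / c)).
  assert (Hre : logF_re nu mu t r ph
                = (c * t - y * 0) + (- mu * ln r + - (exp (nu * ln r) * cos (nu * ph)))).
  { unfold logF_re, Rpower. replace (t * r * cos ph) with (t * (r * cos ph)) by ring.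
    unfold r, ph. rewrite Cmod_line_cos. ring. }
  assert (Him : logF_im nu mu t r ph
                = (c * 0 + y * t) + (- mu * ph + - (exp (nu * ln r) * sin (nu * ph)))).
  { unfold logF_im, Rpower. replace (t * r * sin ph) with (t * (r * sin ph)) by ring.
    unfold r, ph. rewrite Cmod_line_sin. ring. }
  unfold line_re, line_im. fold r ph. rewrite Hre, Him, !exp_plus.
  unfold Cmult, RtoC. simpl. f_equal; ring.
Qed.

Lemma Cmod_line_opp y : Cmod (c, - y) = Cmod (c, y).
Proof. unfold Cmod. simpl. f_equal. ring. Qed.

Lemma atan_line_opp y : atan (- y / c) = - atan (y / c).
Proof. replace (- y / c) with (- (y / c)) by (field; lra). apply atan_opp. Qed.

Lemma line_re_even y : line_re (- y) = line_re y.
Proof.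
  unfold line_re. rewrite Cmod_line_opp, atan_line_opp, logF_re_conj, logF_im_conj.
  now rewrite cos_neg.
Qed.

Lemma line_im_odd y : line_im (- y) = - line_im y.
Proof.
  unfold line_im. rewrite Cmod_line_opp, atan_line_opp, logF_re_conj, logF_im_conj, sin_neg.
  ring.
Qed.

End Line.

(** * Estimates *)

Section Estimates.
Variables (nu mu t c : R).
Hypothesis nu_bounds : 0 < nu < 1.
Hypothesis mu_bounds : 0 <= mu < 1.
Hypothesis t_pos : 0 < t.
Hypothesis c_pos : 0 < c.

Definition line_bound : R := exp (t * c) * decay_bound nu 2 (cos (nu * (PI / 2))).

Lemma exp_logF_re_line_le y : 1 <= y ->
  exp (logF_re nu mu t (Cmod (c, y)) (atan (y / c))) <= line_bound / (y * y).
Proof.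
  intros Hy. pose proof PI_RGT_0.
  set (r := Cmod (c, y)). set (ph := atan (y / c)).
  assert (Hyr : y <= r).
  { unfold r, Cmod. cbn [fst snd]. rewrite <- (sqrt_pow2 y) at 1 by lra.
    apply sqrt_le_1_alt. pose proof (pow2_ge_0 c). lra. }
  assert (Hph : 0 < ph < PI / 2).
  { unfold ph. pose proof (atan_bound (y / c)). split; [| lra].
    rewrite <- atan_0. apply atan_increasing, Rdiv_lt_0_compat; lra. }
  assert (Hk : 0 < cos (nu * (PI / 2))) by (apply cos_gt_0; nra).
  assert (Hcos : cos (nu * (PI / 2)) <= cos (nu * ph)) by (apply cos_decr_1; nra).
  assert (Hre : logF_re nu mu t r ph <= t * c + - (cos (nu * (PI / 2)) * Rpower r nu)).
  { unfold logF_re. replace (t * r * cos ph) with (t * (r * cos ph)) by ring.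
    unfold r, ph. rewrite Cmod_line_cos by auto. fold r ph.
    assert (0 <= ln r) by (rewrite <- ln_1; apply ln_le; lra).
    assert (0 < Rpower r nu) by apply exp_pos. nra. }
  assert (Hdecay := Rpower_exp_decay_le nu 2 (cos (nu * (PI / 2))) r
                      ltac:(lra) ltac:(lra) Hk ltac:(lra)).
  rewrite Rpower_2 in Hdecay by lra.
  eapply Rle_trans; [apply exp_le_compat, Hre |]. rewrite exp_plus. unfold line_bound.
  set (D := decay_bound nu 2 (cos (nu * (PI / 2)))) in *.
  replace (exp (t * c) * D / (y * y)) with (exp (t * c) * (D / (y * y))) by (field; nra).
  apply Rmult_le_compat_l; [apply Rlt_le, exp_pos |].
  apply Rmult_le_reg_l with (y * y); [nra |].
  replace (y * y * (D / (y * y))) with D by (field; nra).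
  eapply Rle_trans; [| exact Hdecay].
  apply Rmult_le_compat_r; [apply Rlt_le, exp_pos | nra].
Qed.

Lemma abs_line_re_le y : 1 <= y -> Rabs (line_re nu mu t c y) <= line_bound / (y * y).
Proof.
  intros Hy. unfold line_re. rewrite Rabs_mult, (Rabs_pos_eq (exp _)) by (apply Rlt_le, exp_pos).
  eapply Rle_trans; [| now apply exp_logF_re_line_le].
  rewrite <- Rmult_1_r. apply Rmult_le_compat_l; [apply Rlt_le, exp_pos | apply Rabs_cos_le_1].
Qed.

Lemma abs_line_im_le y : 1 <= y -> Rabs (line_im nu mu t c y) <= line_bound / (y * y).
Proof.
  intros Hy. unfold line_im. rewrite Rabs_mult, (Rabs_pos_eq (exp _)) by (apply Rlt_le, exp_pos).
  eapply Rle_trans; [| now apply exp_logF_re_line_le].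
  rewrite <- Rmult_1_r. apply Rmult_le_compat_l; [apply Rlt_le, exp_pos | apply Rabs_sin_le_1].
Qed.

Lemma abs_form_th_small_le eps th : 0 < eps <= 1 ->
  Rabs (form_th nu mu t eps th) <= exp (t + 1) * Rpower eps (1 - mu).
Proof.
  intros Heps. unfold form_th.
  rewrite !Rabs_mult, (Rabs_pos_eq eps), (Rabs_pos_eq (exp _)) by (try apply Rlt_le, exp_pos; lra).
  assert (Hln : ln eps <= 0) by (rewrite <- ln_1; apply ln_le; lra).
  assert (Hre : logF_re nu mu t eps th <= (t + 1) + - mu * ln eps).
  { unfold logF_re. pose proof (COS_bound th). pose proof (COS_bound (nu * th)).
    assert (Rpower eps nu <= 1) by (rewrite <- exp_0; unfold Rpower; apply exp_le_compat; nra).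
    assert (0 < Rpower eps nu) by apply exp_pos.
    assert (eps * cos th <= 1) by nra. assert (t * eps * cos th <= t) by nra.
    assert (- (Rpower eps nu * cos (nu * th)) <= 1) by nra.
    lra. }
  assert (Hpow : Rpower eps (1 - mu) = eps * exp (- mu * ln eps)).
  { unfold Rpower. replace ((1 - mu) * ln eps) with (ln eps + - mu * ln eps) by ring.
    rewrite exp_plus, exp_ln; lra. }
  rewrite Hpow.
  apply exp_le_compat in Hre. rewrite exp_plus in Hre.
  pose proof (exp_pos (logF_re nu mu t eps th)).
  apply Rle_trans with (eps * exp (logF_re nu mu t eps th)).
  - rewrite <- (Rmult_1_r (eps * exp _)) at 2.
    apply Rmult_le_compat_l; [apply Rmult_le_pos; lra | apply Rabs_cos_le_1].
  - replace (exp (t + 1) * (eps * exp (- mu * ln eps)))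
      with (eps * (exp (t + 1) * exp (- mu * ln eps))) by ring.
    apply Rmult_le_compat_l; lra.
Qed.

Lemma filterlim_small_arc :
  filterlim (fun eps => RInt (form_th nu mu t eps) 0 PI) (at_right 0) (locally 0).
Proof.
  pose proof PI_RGT_0.
  apply (filterlim_abs_le_0 _ (fun eps => PI * (exp (t + 1) * Rpower eps (1 - mu)))).
  - exists (mkposreal 1 Rlt_0_1). intros eps Heps Hpos.
    change (Rabs (eps - 0) < 1) in Heps. rewrite Rminus_0_r, Rabs_pos_eq in Heps by lra.
    replace PI with (PI - 0) at 2 by ring.
    apply abs_RInt_le_const; [lra | |].
    + apply ex_RInt_continuous_R. intros. apply continuous_form_th. lra.
    + intros th _. apply abs_form_th_small_le. lra.
  - apply filterlim_mult_0, filterlim_mult_0, filterlim_Rpower_at_right_0. lra.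
Qed.

(* The large arc is split at θ = π/(1+ν): before it cos(νθ) stays away from 0,
   after it cos θ does. *)
Definition arc_split : R := PI / (1 + nu).
Definition arc_kappa : R := cos (nu * arc_split).
Definition arc_delta : R := - cos arc_split.

Lemma arc_split_bounds : PI / 2 < arc_split < PI /\ 0 < nu * arc_split < PI / 2.
Proof.
  pose proof PI_RGT_0. unfold arc_split. split; split.
  - apply Rmult_lt_reg_r with (2 * (1 + nu)); [nra |]. field_simplify; nra.
  - apply Rmult_lt_reg_r with (1 + nu); [lra |]. field_simplify; nra.
  - apply Rmult_lt_0_compat; [lra | apply Rdiv_lt_0_compat; lra].
  - apply Rmult_lt_reg_r with (2 * (1 + nu)); [nra |]. field_simplify; nra.
Qed.

Lemma arc_kappa_pos : 0 < arc_kappa.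
Proof. unfold arc_kappa. destruct arc_split_bounds. apply cos_gt_0; lra. Qed.

Lemma arc_delta_pos : 0 < arc_delta.
Proof.
  unfold arc_delta. destruct arc_split_bounds.
  assert (cos arc_split < 0) by (apply cos_lt_0; lra). lra.
Qed.

Lemma logF_re_arc_near b th : c < b -> acos (c / b) <= th <= arc_split ->
  logF_re nu mu t b th + mu * ln b <= t * c - arc_kappa * Rpower b nu.
Proof.
  intros Hb Hth. pose proof PI_RGT_0. destruct arc_split_bounds.
  destruct (acos_div_bounds c b c_pos Hb) as [Hbeta Hcos].
  assert (b * cos th <= c).
  { apply Rmult_le_reg_r with (/ b); [apply Rinv_0_lt_compat; lra |].
    replace (b * cos th * / b) with (cos th) by (field; lra).
    change (cos th <= c / b). rewrite <- Hcos. apply cos_decr_1; lra. }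
  assert (arc_kappa <= cos (nu * th)) by (unfold arc_kappa; apply cos_decr_1; nra).
  assert (0 < Rpower b nu) by apply exp_pos.
  unfold logF_re. nra.
Qed.

Lemma logF_re_arc_far b th : 0 < b -> arc_split <= th <= PI ->
  logF_re nu mu t b th + mu * ln b <= - (t * arc_delta) * b + Rpower b nu.
Proof.
  intros Hb Hth. pose proof PI_RGT_0. destruct arc_split_bounds.
  assert (cos th <= - arc_delta)
    by (unfold arc_delta; rewrite Ropp_involutive; apply cos_decr_1; lra).
  assert (t * b * cos th <= t * b * - arc_delta) by (apply Rmult_le_compat_l; nra).
  pose proof (COS_bound (nu * th)).
  assert (0 < Rpower b nu) by apply exp_pos.
  unfold logF_re. nra.
Qed.

Lemma abs_form_th_arc_le b th : c < b -> acos (c / b) <= th <= PI ->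
  Rabs (form_th nu mu t b th)
  <= Rpower b (1 - mu) * (exp (t * c) * exp (- (arc_kappa * Rpower b nu))
                          + exp (- (t * arc_delta) * b + Rpower b nu)).
Proof.
  intros Hb Hth.
  assert (Hform : Rabs (form_th nu mu t b th)
                  <= Rpower b (1 - mu) * exp (logF_re nu mu t b th + mu * ln b)).
  { unfold form_th, Rpower.
    rewrite exp_plus, !Rabs_mult, (Rabs_pos_eq b), (Rabs_pos_eq (exp _))
      by (try apply Rlt_le, exp_pos; lra).
    replace (exp ((1 - mu) * ln b) * (exp (logF_re nu mu t b th) * exp (mu * ln b)))
      with (exp (ln b) * exp (logF_re nu mu t b th)) by (rewrite <- !exp_plus; f_equal; ring).
    rewrite exp_ln by lra.
    pose proof (exp_pos (logF_re nu mu t b th)).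
    rewrite <- (Rmult_1_r (b * exp _)) at 2.
    apply Rmult_le_compat_l; [apply Rmult_le_pos; lra | apply Rabs_cos_le_1]. }
  eapply Rle_trans; [exact Hform |].
  apply Rmult_le_compat_l; [apply Rlt_le, exp_pos |].
  assert (0 < exp (t * c) * exp (- (arc_kappa * Rpower b nu)))
    by (apply Rmult_lt_0_compat; apply exp_pos).
  pose proof (exp_pos (- (t * arc_delta) * b + Rpower b nu)).
  destruct (Rle_lt_dec th arc_split).
  - eapply Rle_trans; [apply exp_le_compat, logF_re_arc_near; auto; lra |].
    unfold Rminus. rewrite exp_plus. lra.
  - eapply Rle_trans; [apply exp_le_compat, logF_re_arc_far; lra |]. lra.
Qed.

Definition arc_bound : R :=
  exp (t * c) * decay_bound nu (2 - mu) arc_kappa + decay_bound 1 (2 - mu) (t * arc_delta / 2).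

Lemma abs_form_th_arc_le_eventually : Rbar_locally p_infty (fun b =>
  forall th, acos (c / b) <= th <= PI -> Rabs (form_th nu mu t b th) <= arc_bound / b).
Proof.
  pose proof arc_kappa_pos. pose proof arc_delta_pos.
  assert (Hk : 0 < t * arc_delta / 2) by (apply Rdiv_lt_0_compat; nra).
  destruct (Rpower_le_mul_eventually nu _ (proj2 nu_bounds) Hk) as [M HM].
  exists (Rmax M c). intros b Hb th Hth.
  pose proof (Rmax_l M c). pose proof (Rmax_r M c).
  eapply Rle_trans; [apply abs_form_th_arc_le; auto; lra |].
  set (P := Rpower b (2 - mu)).
  set (A := exp (- (arc_kappa * Rpower b nu))).
  set (B := exp (- (t * arc_delta) * b + Rpower b nu)).
  assert (HP : Rpower b (1 - mu) = P / b).
  { unfold P. replace (2 - mu) with ((1 - mu) + 1) by ring.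
    rewrite Rpower_plus, Rpower_1 by lra. field. lra. }
  assert (HA : P * A <= decay_bound nu (2 - mu) arc_kappa)
    by (apply Rpower_exp_decay_le; lra).
  assert (HB : P * B <= decay_bound 1 (2 - mu) (t * arc_delta / 2)).
  { eapply Rle_trans; [| apply (Rpower_exp_decay_le 1 (2 - mu) _ b); lra].
    apply Rmult_le_compat_l; [apply Rlt_le, exp_pos |].
    rewrite Rpower_1 by lra. apply exp_le_compat. specialize (HM b ltac:(lra)). lra. }
  rewrite HP. unfold arc_bound.
  replace (P / b * (exp (t * c) * A + B)) with ((exp (t * c) * (P * A) + P * B) / b)
    by (field; lra).
  apply Rmult_le_compat_r; [apply Rlt_le, Rinv_0_lt_compat; lra |].
  apply Rplus_le_compat; [apply Rmult_le_compat_l; [apply Rlt_le, exp_pos |] |]; assumption.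
Qed.

Lemma filterlim_large_arc : filterlim (fun b => RInt (form_th nu mu t b) (acos (c / b)) PI)
  (Rbar_locally p_infty) (locally 0).
Proof.
  pose proof PI_RGT_0.
  apply (filterlim_abs_le_0 _ (fun b => PI * arc_bound / b)); [| apply filterlim_div_p_infty].
  destruct abs_form_th_arc_le_eventually as [M HM].
  exists (Rmax M c). intros b Hb. pose proof (Rmax_l M c). pose proof (Rmax_r M c).
  destruct (acos_div_bounds c b c_pos ltac:(lra)) as [Hbeta _].
  assert (0 < arc_bound).
  { unfold arc_bound. apply Rplus_lt_0_compat; [apply Rmult_lt_0_compat |]; apply exp_pos. }
  eapply Rle_trans.
  - apply abs_RInt_le_const; [lra | |].
    + apply ex_RInt_continuous_R. intros. apply continuous_form_th. lra.
    + intros th Hth. apply HM; lra.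
  - unfold Rdiv. rewrite Rmult_assoc. apply Rmult_le_compat_r; [| lra].
    apply Rlt_le, Rmult_lt_0_compat, Rinv_0_lt_compat; lra.
Qed.

End Estimates.

(** * Passing to the limit *)

Lemma line_height_ge c b : 0 < c -> c < b -> b - c <= c * tan (acos (c / b)).
Proof.
  intros Hc Hb.
  assert (Hcb : 0 < c / b < 1) by (split; [apply Rdiv_lt_0_compat | apply Rlt_div_l]; lra).
  rewrite tan_acos by lra.
  set (s := sqrt (1 - (c / b)²)).
  assert (Hs : 0 <= s) by apply sqrt_pos.
  assert (Hs2 : s * s = 1 - (c / b)²) by (apply sqrt_sqrt; unfold Rsqr; nra).
  replace (c * (s / (c / b))) with (b * s) by (field; lra).
  assert (E : (b * s) * (b * s) = b * b - c * c).
  { replace ((b * s) * (b * s)) with (b * b * (s * s)) by ring.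
    rewrite Hs2. unfold Rsqr. field. lra. }
  assert (0 <= b * s) by nra. nra.
Qed.

Lemma filterlim_line_height c : 0 < c ->
  filterlim (fun b => c * tan (acos (c / b))) (Rbar_locally p_infty) (Rbar_locally p_infty).
Proof.
  intros Hc P [M HM]. exists (Rmax c (M + c)). intros b Hb.
  pose proof (Rmax_l c (M + c)). pose proof (Rmax_r c (M + c)).
  apply HM. pose proof (line_height_ge c b Hc). lra.
Qed.

Lemma continuous_rhs_integrand nu mu t u : 0 < u -> continuous (rhs_integrand nu mu t) u.
Proof.
  intros Hu. pose proof PI_RGT_0. apply ex_derive_continuous_R.
  unfold rhs_integrand, Rpower. auto_derive. repeat split; lra.
Qed.

Section Limits.
Variables (nu mu t c : R).
Hypothesis nu_bounds : 0 < nu < 1.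
Hypothesis mu_bounds : 0 <= mu < 1.
Hypothesis t_pos : 0 < t.
Hypothesis c_pos : 0 < c.

Lemma RInt_rhs_integrand_eq a b : 0 < a < c -> c < b ->
  RInt (rhs_integrand nu mu t) a b
  = - / PI * RInt (form_th nu mu t a) 0 PI
    + / PI * (RInt (line_re nu mu t c) 0 (c * tan (acos (c / b)))
              + RInt (form_th nu mu t b) (acos (c / b)) PI).
Proof.
  intros Ha Hb. pose proof PI_RGT_0.
  destruct (acos_div_bounds c b c_pos Hb) as [Hbeta _].
  assert (Hrhs : RInt (fun r => form_r nu mu t r PI) a b
                 = PI * RInt (rhs_integrand nu mu t) a b).
  { rewrite <- (RInt_scal (V := R_CompleteNormedModule)).
    - apply RInt_ext. intros x Hx. rewrite Rmin_left, Rmax_right in Hx by lra.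
      rewrite form_r_PI by lra. reflexivity.
    - apply ex_RInt_continuous_R. intros x Hx. rewrite Rmin_left, Rmax_right in Hx by lra.
      apply continuous_rhs_integrand. lra. }
  rewrite (contour_identity nu mu t c c_pos), (RInt_line_integrand nu mu t c c_pos) in Hrhs
    by lra.
  apply Rmult_eq_reg_l with PI; [| lra].
  rewrite <- Hrhs. field. lra.
Qed.

Lemma is_RInt_gen_rhs_integrand LR :
  filterlim (fun Y => RInt (line_re nu mu t c) 0 Y) (Rbar_locally p_infty) (locally LR) ->
  is_RInt_gen (rhs_integrand nu mu t) (at_right 0) (Rbar_locally p_infty) (LR / PI).
Proof.
  intros HLR. pose proof PI_RGT_0.
  assert (Hnear : at_right 0 (fun a => 0 < a < c)).
  { exists (mkposreal c c_pos). intros a Ha Hpos.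
    change (Rabs (a - 0) < c) in Ha. rewrite Rminus_0_r, Rabs_pos_eq in Ha; simpl in Ha; lra. }
  assert (Hfar : Rbar_locally p_infty (fun b => c < b)) by now exists c.
  apply is_RInt_gen_of_cvg.
  - apply (Filter_prod _ _ _ _ _ Hnear Hfar). intros a b Ha Hb. simpl.
    apply ex_RInt_continuous_R. intros x Hx. rewrite Rmin_left, Rmax_right in Hx by lra.
    apply continuous_rhs_integrand. lra.
  - replace (LR / PI) with (- / PI * 0 + / PI * (LR + 0)) by (field; lra).
    set (small_arc a := - / PI * RInt (form_th nu mu t a) 0 PI).
    set (line_and_large_arc b := / PI * (RInt (line_re nu mu t c) 0 (c * tan (acos (c / b)))
                                         + RInt (form_th nu mu t b) (acos (c / b)) PI)).
    apply (filterlim_ext_loc (fun ab => small_arc (fst ab) + line_and_large_arc (snd ab))).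
    + apply (Filter_prod _ _ _ _ _ Hnear Hfar). intros a b Ha Hb. simpl.
      symmetry. now apply RInt_rhs_integrand_eq.
    + apply filterlim_prod_plus.
      * rewrite Rmult_0_r. apply filterlim_mult_0, filterlim_small_arc; auto.
      * apply (is_lim_scal_l _ (/ PI) p_infty (LR + 0)), (is_lim_plus' _ _ p_infty).
        -- exact (filterlim_comp _ _ _ _ _ _ _ _ (filterlim_line_height c c_pos) HLR).
        -- apply filterlim_large_arc; auto.
Qed.

Lemma inv_laplace_value_of_line_limits LR LI :
  filterlim (fun Y => RInt (line_re nu mu t c) 0 Y) (Rbar_locally p_infty) (locally LR) ->
  filterlim (fun Y => RInt (line_im nu mu t c) 0 Y) (Rbar_locally p_infty) (locally LI) ->
  inv_laplace_value nu mu c t (RtoC (LR / PI)).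
Proof.
  intros HLR HLI. pose proof PI_RGT_0.
  pose proof (continuous_line_re nu mu t c c_pos) as Hre_cont.
  pose proof (continuous_line_im nu mu t c c_pos) as Him_cont.
  assert (Hre := is_RInt_gen_of_primitive _ _ _ Hre_cont
    (filterlim_RInt_0_m_infty _ 1 LR Hre_cont
       ltac:(intros; rewrite line_re_even by auto; ring) HLR) HLR).
  assert (Him := is_RInt_gen_of_primitive _ _ _ Him_cont
    (filterlim_RInt_0_m_infty _ (-1) LI Him_cont
       ltac:(intros; rewrite line_im_odd by auto; ring) HLI) HLI).
  assert (Hpair := is_RInt_gen_scal _ (/ (2 * PI)) _ (is_RInt_gen_pair _ _ _ _ Hre Him)).
  unfold inv_laplace_value.
  replace (RtoC (LR / PI)) with (scal (/ (2 * PI)) (- (- 1 * LR) + LR, - (- -1 * LI) + LI)).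
  - apply (is_RInt_gen_ext
             (fun y => scal (/ (2 * PI)) (line_re nu mu t c y, line_im nu mu t c y))).
    + apply filter_forall. intros ab x _. rewrite bromwich_integrand_eq by auto. reflexivity.
    + exact Hpair.
  - unfold scal; simpl. unfold prod_scal, scal; simpl. unfold mult; simpl. unfold RtoC.
    f_equal; field; lra.
Qed.

End Limits.

Theorem mainTheorem1 (nu mu t c : R) :
  0 < nu < 1 -> 0 <= mu < 1 -> 0 < t -> 0 < c ->
  exists I : R,
    is_RInt_gen (rhs_integrand nu mu t) (at_right 0) (Rbar_locally p_infty) I /\
    inv_laplace_value nu mu c t (RtoC I).
Proof.
  intros Hnu Hmu Ht Hc.
  destruct (RInt_cvg_of_inv_sqr_bound (line_re nu mu t c) (line_bound nu t c))
    as [LR HLR]; [now apply continuous_line_re | now apply abs_line_re_le |].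
  destruct (RInt_cvg_of_inv_sqr_bound (line_im nu mu t c) (line_bound nu t c))
    as [LI HLI]; [now apply continuous_line_im | now apply abs_line_im_le |].
  exists (LR / PI). split.
  - now apply (is_RInt_gen_rhs_integrand nu mu t c).
  - now apply (inv_laplace_value_of_line_limits nu mu t c Hc LR LI).
Qed.
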